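(* Let $L$ be a finite-dimensional Lie algebra over a field $F$, let $M$ be a maximal subalgebra of $L$ and let $B$ be an ideal of $L$ with $B\subseteq M$. Let $C/B$ be an ideal completion of $M/B$ in $L/B$, put $k_{L/B}(C/B)=K/B$, and let $D$ be an ideal completion of $M$ in $L$. Then $C/K\cong D/k_L(D)$.
   Context: For a Lie algebra $L$ and a nonzero subalgebra $X$ of $L$, the strict core $k_L(X)$ is the sum of all ideals of $L$ that are proper subalgebras of $X$ (it is $0$ if there are none). A subalgebra $C$ of $L$ is a completion of a maximal subalgebra $M$ if $C\not\subseteq M$ but every proper subalgebra of $C$ that is an ideal of $L$ is contained in $M$. An ideal completion of $M$ is a completion of $M$ which is an ideal of $L$. *)

From HB Require Import structures.
From mathcomp Require Import all_boot all_order all_algebra.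
From Stdlib Require Import ClassicalEpsilon.
Set Implicit Arguments.
Unset Strict Implicit.
Unset Printing Implicit Defensive.
Import GRing.Theory.
Local Open Scope ring_scope.

Section Lie.
Variables (F : fieldType) (L : vectType F) (br : L -> L -> L).

Definition is_lie : Prop :=
  [/\ (forall (a : F) (x y z : L), br (a *: x + y) z = a *: br x z + br y z),
      (forall (a : F) (x y z : L), br z (a *: x + y) = a *: br z x + br z y),
      (forall x : L, br x x = 0) &
      (forall x y z : L, br x (br y z) + br y (br z x) + br z (br x y) = 0)].

(* Notions in the quotient algebra L/B, for a subspace B (an ideal of L);
   a subspace X/B of L/B is represented by X with B <= X.
   Membership of [x,y] + B in X/B means [x,y] \in X + B. *)
Definition subalg_mod (B X : {vspace L}) : Prop :=
  (B <= X)%VS /\ forall x y, x \in X -> y \in X -> br x y \in (X + B)%VS.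

Definition ideal_mod (B X : {vspace L}) : Prop :=
  (B <= X)%VS /\ forall x y, y \in X -> br x y \in (X + B)%VS.

(* proper subspace:  X/B is a proper subset of Y/B  iff  X < Y *)
Definition proper_sub (X Y : {vspace L}) : bool := (X <= Y)%VS && (X != Y).

Definition completion_mod (B M C : {vspace L}) : Prop :=
  [/\ subalg_mod B C, ~~ (C <= M)%VS &
      forall I, subalg_mod B I -> proper_sub I C -> ideal_mod B I -> (I <= M)%VS].

Definition ideal_completion_mod (B M C : {vspace L}) : Prop :=
  completion_mod B M C /\ ideal_mod B C.

Definition is_sum_mod (B : {vspace L}) (P : {vspace L} -> Prop) (K : {vspace L}) :=
  [/\ (B <= K)%VS, (forall I, P I -> (I <= K)%VS) &
      (forall W, (B <= W)%VS -> (forall I, P I -> (I <= W)%VS) -> (K <= W)%VS)].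

Definition strict_core_cand (B X I : {vspace L}) : Prop :=
  [/\ ideal_mod B I, subalg_mod B I & proper_sub I X].

(* k_{L/B}(X/B) = (strict_core_mod B X)/B *)
Definition strict_core_mod (B X : {vspace L}) : {vspace L} :=
  epsilon (inhabits B) (is_sum_mod B (strict_core_cand B X)).

Definition subalg (X : {vspace L}) := subalg_mod 0%VS X.
Definition ideal (X : {vspace L}) := ideal_mod 0%VS X.
Definition ideal_completion (M C : {vspace L}) := ideal_completion_mod 0%VS M C.
Definition strict_core (X : {vspace L}) := strict_core_mod 0%VS X.

Definition maximal_subalg (M : {vspace L}) : Prop :=
  [/\ subalg M, M != fullv &
      forall S, subalg S -> (M <= S)%VS -> S = M \/ S = fullv].

(* X/Y is isomorphic (as a Lie algebra) to X'/Y' : there is a linear map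
   X -> X' (extended to L) inducing a bijective bracket-preserving map
   X/Y -> X'/Y'.  Every linear map X/Y -> X'/Y' lifts to such an f. *)
Definition sect_iso (X Y X' Y' : {vspace L}) : Prop :=
  exists f : 'End(L),
    [/\ (f @: X <= X')%VS, (f @: Y <= Y')%VS,
        (forall x, x \in X -> f x \in Y' -> x \in Y),
        (X' <= f @: X + Y')%VS &
        (forall x y, x \in X -> y \in X -> f (br x y) - br (f x) (f y) \in Y')].

End Lie.

From mathcomp Require Import all_boot all_order all_algebra.
From mathcomp Require Import zify.
From Stdlib Require Import ClassicalEpsilon.
Set Implicit Arguments.
Unset Strict Implicit.
Unset Printing Implicit Defensive.
Import GRing.Theory.
Local Open Scope ring_scope.

(* Since C is not contained in M, the strict core K of C/B (resp. K' of D) is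
   the largest ideal of L between B and C :&: M (resp. between 0 and D :&: M).
   If C :&: D <= M, then M :&: C and M :&: D are ideals, so K = M :&: C,
   K' = M :&: D, and C/K ~ L/M ~ D/K' via x |-> d with x + d \in M; the sign
   is what makes brackets correspond, because [C, D] <= C :&: D <= M.
   Otherwise C :&: D is an ideal of D outside M, so the completion property
   forces D <= C, and then B + D = C; now C/K ~ D/K' via x |-> d with
   x - d \in B. *)

Section LieAlgebra.
Variables (F : fieldType) (L : vectType F) (br : L -> L -> L).
Hypothesis Hlie : is_lie br.

Lemma brDl x y z : br (x + y) z = br x z + br y z.
Proof. by case: Hlie => brZDl _ _ _; have := brZDl 1 x y z; rewrite !scale1r. Qed.

Lemma brDr x y z : br z (x + y) = br z x + br z y.
Proof. by case: Hlie => _ brZDr _ _; have := brZDr 1 x y z; rewrite !scale1r. Qed.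

Lemma br0l z : br 0 z = 0.
Proof. by have := brDl 0 0 z; rewrite addr0 => /esym/eqP; rewrite -subr_eq0 addrK => /eqP. Qed.

Lemma br0r z : br z 0 = 0.
Proof. by have := brDr 0 0 z; rewrite addr0 => /esym/eqP; rewrite -subr_eq0 addrK => /eqP. Qed.

Lemma brNl x z : br (- x) z = - br x z.
Proof. by apply/eqP; rewrite -subr_eq0 opprK -brDl addNr br0l. Qed.

Lemma brNr x z : br z (- x) = - br z x.
Proof. by apply/eqP; rewrite -subr_eq0 opprK -brDr addNr br0r. Qed.

Lemma brBl x y z : br (x - y) z = br x z - br y z.
Proof. by rewrite brDl brNl. Qed.

Lemma brBr x y z : br z (x - y) = br z x - br z y.
Proof. by rewrite brDr brNr. Qed.

Lemma brC x y : br x y = - br y x.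
Proof.
case: Hlie => _ _ brxx _; apply/eqP; rewrite -addr_eq0.
by have := brxx (x + y); rewrite brDl !brDr !brxx add0r addr0 => ->.
Qed.

Lemma idealP X : ideal br X <-> (forall x y, y \in X -> br x y \in X).
Proof.
rewrite /ideal /ideal_mod addv0; split=> [[] // | idX].
by split; first exact: sub0v.
Qed.

Lemma ideal_memr X x y : ideal br X -> y \in X -> br x y \in X.
Proof. by move/idealP; apply. Qed.

Lemma ideal_meml X x y : ideal br X -> x \in X -> br x y \in X.
Proof. by move=> idX xX; rewrite brC memvN ideal_memr. Qed.

Lemma ideal0 : ideal br 0%VS.
Proof. by apply/idealP => x y; rewrite memv0 => /eqP ->; rewrite br0r mem0v. Qed.

Lemma idealD X Y : ideal br X -> ideal br Y -> ideal br (X + Y)%VS.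
Proof.
move=> idX idY; apply/idealP => x _ /memv_addP[u uX [v vY ->]].
by rewrite brDr memv_add ?ideal_memr.
Qed.

Lemma idealI X Y : ideal br X -> ideal br Y -> ideal br (X :&: Y)%VS.
Proof.
move=> idX idY; apply/idealP => x y; rewrite !memv_cap => /andP[yX yY].
by rewrite !ideal_memr.
Qed.

Lemma ideal_modE B X : ideal_mod br B X <-> (B <= X)%VS /\ ideal br X.
Proof.
rewrite (idealP X); split=> -[BX idX]; split=> //.
  by move=> x y /idX; move/addv_idPl: BX => ->.
by move/addv_idPl: BX => ->.
Qed.

Lemma ideal_subalg_mod B X : (B <= X)%VS -> ideal br X -> subalg_mod br B X.
Proof.
move=> BX idX; split=> // x y _ yX.
by move/addv_idPl: BX => ->; apply: ideal_memr.
Qed.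

Lemma subalg_closed M x y : subalg br M -> x \in M -> y \in M -> br x y \in M.
Proof. by case=> _ clM xM yM; have := clM x y xM yM; rewrite addv0. Qed.

Lemma addv_ideal_maximal M X :
  maximal_subalg br M -> ideal br X -> ~~ (X <= M)%VS -> (M + X)%VS = fullv.
Proof.
case=> sM _ maxM idX XnM.
have sMX : subalg br (M + X)%VS.
  split=> [|_ _ /memv_addP[m mM [x xX ->]] /memv_addP[m' m'M [x' x'X ->]]].
    exact: sub0v.
  rewrite addv0 brDl brDr -addrA; apply: memv_add; first exact: subalg_closed.
  by apply: memvD; [exact: ideal_memr | exact: ideal_meml].
case: (maxM _ sMX (addvSl M X)) => // MXM.
by move: XnM; rewrite -MXM addvSr.
Qed.

Lemma ideal_subalg_capv M X Y : subalg br M -> ideal br X -> ideal br Y ->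
  (M + Y)%VS = fullv -> (X :&: Y <= M)%VS -> ideal br (M :&: X)%VS.
Proof.
move=> sM idX idY MY XYM; apply/idealP => x z; rewrite !memv_cap => /andP[zM zX].
have /memv_addP[m mM [y yY ->]] : x \in (M + Y)%VS by rewrite MY memvf.
have yzM : br y z \in M.
  by apply: (subvP XYM); rewrite memv_cap; apply/andP; split;
    [exact: ideal_memr | exact: ideal_meml].
rewrite brDl; apply/andP; split; apply: memvD => //.
- exact: subalg_closed.
- exact: ideal_memr.
- exact: ideal_memr.
Qed.

Lemma ex_greatest_vspace (P : {vspace L} -> Prop) I0 :
  P I0 -> (forall I J, P I -> P J -> P (I + J)%VS) ->
  exists2 K, P K & forall I, P I -> (I <= K)%VS.
Proof.
move=> PI0 PD; have [n] := ubnP (\dim {:L} - \dim I0).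
elim: n I0 PI0 => // n IH I PI ltIn.
case: (classic (exists2 J, P J & ~~ (J <= I)%VS)) => [[J PJ JnI] | noJ]; last first.
  by exists I => // J PJ; apply: negbNE; apply/negP => JnI; case: noJ; exists J.
apply: (IH (I + J)%VS (PD _ _ PI PJ)).
have ltIJ : (\dim I < \dim (I + J))%N.
  rewrite (ltn_leqif (dimv_leqif_eq (addvSl I J))).
  by apply: contra JnI => /eqP ->; apply: addvSr.
by have := dimvS (subvf (I + J)%VS); lia.
Qed.

Definition greatest_ideal (B X K : {vspace L}) : Prop :=
  [/\ ideal br K, (B <= K)%VS, (K <= X)%VS &
      forall I, ideal br I -> (B <= I)%VS -> (I <= X)%VS -> (I <= K)%VS].

Lemma strict_core_mod_eq B X K :
  (B <= K)%VS -> strict_core_cand br B X K ->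
  (forall I, strict_core_cand br B X I -> (I <= K)%VS) ->
  strict_core_mod br B X = K.
Proof.
move=> BK candK Kmax.
have [_ sumX sumX_min] : is_sum_mod B (strict_core_cand br B X) (strict_core_mod br B X).
  by apply: epsilon_spec; exists K; split=> // W _; apply.
by apply/eqP; rewrite eqEsubv sumX_min //= sumX.
Qed.

Lemma strict_core_candE B M C : completion_mod br B M C ->
  forall I, strict_core_cand br B C I <->
    [/\ ideal br I, (B <= I)%VS & (I <= C :&: M)%VS].
Proof.
case=> _ CnM minC I; split.
- case=> idI sI /andP[IC nIC]; have [BI idI'] := (ideal_modE B I).1 idI.
  by split=> //; rewrite subv_cap IC; apply: minC => //; apply/andP.
- case=> idI BI; rewrite subv_cap => /andP[IC IM]; split.
  + by apply/ideal_modE.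
  + exact: ideal_subalg_mod.
  + by apply/andP; split=> //; apply: contraNneq CnM => <-.
Qed.

Lemma strict_core_mod_greatest B M C : ideal br B -> (B <= M)%VS ->
  completion_mod br B M C -> greatest_ideal B (C :&: M) (strict_core_mod br B C).
Proof.
move=> idB BM complC; have [[BC _] _ _] := complC.
have candE := strict_core_candE complC.
have [K [idK BK KCM] Kmax] : exists2 K,
    [/\ ideal br K, (B <= K)%VS & (K <= C :&: M)%VS] &
    forall I, [/\ ideal br I, (B <= I)%VS & (I <= C :&: M)%VS] -> (I <= K)%VS.
  apply: (ex_greatest_vspace (I0 := B)); first by rewrite subv_cap BC BM.
  move=> I J [idI BI ICM] [idJ _ JCM]; split; first exact: idealD.
    exact: subv_trans BI (addvSl I J).
  by rewrite subv_add ICM.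
rewrite (strict_core_mod_eq BK); first by split=> // I *; apply: Kmax.
  by apply/candE.
by move=> I /candE; apply: Kmax.
Qed.

Lemma completion_mod_eq B M C I : completion_mod br B M C ->
  ideal br I -> (B <= I)%VS -> (I <= C)%VS -> ~~ (I <= M)%VS -> I = C.
Proof.
case=> _ _ minC idI BI IC; apply: contraNeq => nIC.
apply: minC; [exact: ideal_subalg_mod | by apply/andP | by apply/ideal_modE].
Qed.

Lemma sect_iso_of_congr (N X Y X' Y' : {vspace L}) (c : F) : c != 0 ->
  (N + X)%VS = (N + X')%VS -> (Y <= X)%VS ->
  ((N + Y) :&: X' <= Y')%VS -> ((N + Y') :&: X <= Y)%VS ->
  (forall x y, x \in X -> y \in X -> br x y \in X) ->
  (forall x y u v w, x \in X -> y \in X -> u \in X' -> v \in X' -> w \in X' ->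
     x - c *: u \in N -> y - c *: v \in N -> br x y - c *: w \in N ->
     w - br u v \in Y') ->
  sect_iso br X Y X' Y'.
Proof.
move=> c0 NX YX NYX' NY'X clX congr_br.
pose f : 'End(L) := c^-1 *: addv_pi2 N X'.
have fX' z : f z \in X' by rewrite scale_lfunE memvZ ?memv_pi2.
have fN z : z \in X -> z - c *: f z \in N.
  move=> zX; rewrite scale_lfunE scalerA mulfV // scale1r.
  have zNX' : z \in (N + X')%VS by rewrite -NX (subvP (addvSr N X)).
  by rewrite -{1}(addv_pi1_pi2 zNX') addrK memv_pi1.
have NX'Y' : (N :&: X' <= Y')%VS := subv_trans (capvS (addvSl N Y) (subvv X')) NYX'.
exists f; split.
- by apply/subvP => _ /memv_imgP[x _ ->].
- apply/subvP => _ /memv_imgP[y yY ->].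
  have cfyY' : c *: f y \in Y'.
    apply: (subvP NYX'); rewrite memv_cap; apply/andP; split; last exact: memvZ.
    have -> : c *: f y = y - (y - c *: f y) by rewrite opprB addrC subrK.
    apply: memvB; first exact: (subvP (addvSr N Y)).
    by apply: (subvP (addvSl N Y)); apply: fN; apply: (subvP YX).
  by rewrite -[f y]scale1r -(mulVf c0) -scalerA memvZ.
- move=> x xX fxY'; apply: (subvP NY'X); rewrite memv_cap xX andbT.
  rewrite -(subrK (c *: f x) x); apply: memv_add; first exact: fN.
  exact: memvZ.
- apply/subvP => d dX'.
  have /memv_addP[n nN [x xX dE]] : d \in (N + X)%VS by rewrite NX (subvP (addvSr N X')).
  rewrite -(subrK (f (c *: x)) d) addrC; apply: memv_add.
    by apply: memv_img; rewrite memvZ.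
  apply: (subvP NX'Y'); rewrite memv_cap; apply/andP; split; last exact: memvB.
  by rewrite linearZ /= dE -addrA; apply: memvD => //; apply: fN.
- move=> x y xX yX; apply: (congr_br x y) => //; try exact: fX'.
  all: by apply: fN => //; apply: clX.
Qed.

Section CoreIsomorphism.
Variables M B C D : {vspace L}.
Hypotheses (maxM : maximal_subalg br M) (idB : ideal br B) (BM : (B <= M)%VS).
Hypotheses (complC : completion_mod br B M C) (idC : ideal br C).
Hypotheses (complD : completion_mod br 0 M D) (idD : ideal br D).

Let K := strict_core_mod br B C.
Let K' := strict_core br D.

Let K_greatest : greatest_ideal B (C :&: M) K.
Proof. exact: strict_core_mod_greatest. Qed.

Let K'_greatest : greatest_ideal 0 (D :&: M) K'.
Proof. exact: strict_core_mod_greatest ideal0 (sub0v M) complD. Qed.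

Lemma sect_iso_core_capv_sub : (C :&: D <= M)%VS -> sect_iso br C K D K'.
Proof.
move=> CDM; have [sM _ _] := maxM; have [[BC _] CnM _] := complC.
have [_ DnM _] := complD.
have MC := addv_ideal_maximal maxM idC CnM.
have MD := addv_ideal_maximal maxM idD DnM.
have [_ BK + Kmax] := K_greatest; rewrite subv_cap => /andP[KC KM].
have [_ _ + K'max] := K'_greatest; rewrite subv_cap => /andP[K'D K'M].
have MD_K' : (M :&: D <= K')%VS.
  apply: K'max; [|exact: sub0v|by rewrite capvC].
  by apply: (ideal_subalg_capv sM idD idC MC); rewrite capvC.
have MC_K : (M :&: C <= K)%VS.
  apply: Kmax; [|by rewrite subv_cap BM BC|by rewrite capvC].
  exact: (ideal_subalg_capv sM idC idD MD).
have CD_M z : z \in C -> z \in D -> z \in M.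
  by move=> zC zD; apply: (subvP CDM); rewrite memv_cap zC.
apply: (sect_iso_of_congr (N := M) (c := -1)) => //.
- by rewrite oppr_eq0 oner_eq0.
- by rewrite MC MD.
- by apply: subv_trans MD_K'; apply: capvS => //; rewrite subv_add subvv.
- by apply: subv_trans MC_K; apply: capvS => //; rewrite subv_add subvv.
- by move=> x y xC _; apply: ideal_meml.
move=> x y u v w xC yC uD vD wD; rewrite !scaleN1r !opprK => xuM yvM xywM.
have crossM : br x v + br u y \in M.
  by apply: memvD; apply: CD_M; first [exact: ideal_meml | exact: ideal_memr].
have xyuvM : br x y + br u v \in M.
  rewrite -(rpredDr _ crossM) addrACA [br u v + _]addrC -!brDr -brDl.
  exact: subalg_closed.
apply: (subvP MD_K'); rewrite memv_cap; apply/andP; split.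
  by rewrite -(addrKA (br x y)) [w + _]addrC; apply: memvB.
by apply: memvB => //; apply: ideal_meml.
Qed.
Lemma sect_iso_core_capv_nsub : ~~ (C :&: D <= M)%VS -> sect_iso br C K D K'.
Proof.
move=> CDnM; have [[BC _] _ _] := complC.
have [idK BK + Kmax] := K_greatest; rewrite subv_cap => /andP[KC KM].
have [idK' _ + K'max] := K'_greatest; rewrite subv_cap => /andP[K'D K'M].
have DC : (D <= C)%VS.
  have CDD := completion_mod_eq complD (idealI idC idD) (sub0v _) (capvSr C D) CDnM.
  by rewrite -CDD capvSl.
have BDC : (B + D)%VS = C.
  apply: (completion_mod_eq complC (idealD idB idD) (addvSl B D)).
    by rewrite subv_add BC DC.
  apply: contra CDnM; rewrite subv_add => /andP[_ DM].
  exact: subv_trans (capvSr C D) DM.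
have BD_K' : (B :&: D <= K')%VS.
  apply: K'max; [exact: idealI | exact: sub0v |].
  by rewrite subv_cap capvSr (subv_trans (capvSl B D)).
apply: (sect_iso_of_congr (N := B) (c := 1)) => //.
- exact: oner_neq0.
- by rewrite -BDC addvA addvv.
- move/addv_idPr: BK => ->; apply: K'max; [exact: idealI | exact: sub0v |].
  by rewrite subv_cap capvSr (subv_trans (capvSl K D)).
- apply: subv_trans (capvSl _ _) _; apply: Kmax; [exact: idealD | exact: addvSl |].
  by rewrite !subv_cap !subv_add BC BM K'M (subv_trans K'D DC).
- by move=> x y xC _; apply: ideal_meml.
move=> x y u v w xC yC uD vD wD; rewrite !scale1r => xuB yvB xywB.
have xyuvB : br x y - br u v \in B.
  have -> : br x y - br u v = br (x - u) y + br u (y - v).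
    by rewrite brBl brBr addrA subrK.
  by apply: memvD; [exact: ideal_meml | exact: ideal_memr].
apply: (subvP BD_K'); rewrite memv_cap; apply/andP; split.
  rewrite -(rpredDr _ xywB) addrC addrA subrK; exact: xyuvB.
by apply: memvB => //; apply: ideal_meml.
Qed.
End CoreIsomorphism.

End LieAlgebra.

Theorem proposition2p3 (F : fieldType) (L : vectType F) (br : L -> L -> L)
  (Hlie : is_lie br) (M B C D : {vspace L}) :
  maximal_subalg br M ->
  ideal br B -> (B <= M)%VS ->
  ideal_completion_mod br B M C ->
  ideal_completion br M D ->
  sect_iso br C (strict_core_mod br B C) D (strict_core br D).
Proof.
move=> maxM idB BM [complC /ideal_modE[_ idC]] [complD /ideal_modE[_ idD]].
have [CDM | CDnM] := boolP (C :&: D <= M)%VS.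
- exact: (sect_iso_core_capv_sub Hlie maxM idB BM complC idC complD idD CDM).
- exact: (sect_iso_core_capv_nsub Hlie idB BM complC idC complD idD CDnM).
Qed.
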